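(* Let $0<q<1$ and let $X\geq 0$ be a random variable whose distribution $P_X$ has a $q$-density $f$ such that the $q$-moments $m_q(n;f)$ are finite for all $n\in\mathbb{N}$. If $$\limsup_{n\to\infty}\frac{\ln m_q(n;f)}{n^2}=A<\frac{\ln(1/q)}{2},$$ then $P_X$ is $q$-moment determinate.
   Context: Fix $0<q<1$. All random variables are non-negative. The Jackson $q$-integral is $\int_0^a g(t)\,d_qt=a(1-q)\sum_{j=0}^\infty g(aq^j)q^j$ for $a>0$, and the improper $q$-integral is $\int_0^\infty g(t)\,d_qt=(1-q)\sum_{j=-\infty}^{\infty}g(q^j)q^j$. A function $f$ on $(0,\infty)$ is a $q$-density of $X$ (with distribution function $F_X$) if $F_X(x)=\int_0^x f(t)\,d_qt$ for all $x>0$. The $n$-th $q$-moment is $m_q(n;f)=m_q(n;X)=\int_0^\infty t^nf(t)\,d_qt=(1-q)\sum_{j\in\mathbb{Z}}q^{j(n+1)}f(q^j)$, $n\in\mathbb{N}_0$. For functions $f,g$ on $(0,\infty)$ write $f\sim g$ iff $f(q^j)=g(q^j)$ for all $j\in\mathbb{Z}$. A distribution $P_X$ with $q$-density $f$ and finite $q$-moments of all orders is $q$-moment determinate if, whenever $Y$ is a random variable with $q$-density $g$ and $m_q(k;Y)=m_q(k;X)$ for all $k\in\mathbb{N}_0$, one has $f\sim g$; otherwise it is $q$-moment indeterminate. *)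

From Stdlib Require Import Reals Lra ZArith.
Open Scope R_scope.

Definition qpow (q : R) (j : Z) : R := powerRZ q j.

(* Jackson q-integral: int_0^a g(t) d_q t = a(1-q) sum_{j>=0} g(a q^j) q^j ;
   [qint_is q g a v] means the series converges and its value is v. *)
Definition qint_is (q : R) (g : R -> R) (a v : R) : Prop :=
  infinite_sum (fun j : nat => a * (1 - q) * g (a * q ^ j) * q ^ j) v.

Definition is_cdf_nonneg (F : R -> R) : Prop :=
  (forall x y, x <= y -> F x <= F y) /\
  (forall x eps, 0 < eps -> exists delta, 0 < delta /\
       forall y, x <= y < x + delta -> Rabs (F y - F x) < eps) /\
  (forall x, x < 0 -> F x = 0) /\
  (forall eps, 0 < eps -> exists M, forall x, M <= x -> Rabs (F x - 1) < eps).

Definition is_qdensity (q : R) (f : R -> R) : Prop :=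
  exists F : R -> R, is_cdf_nonneg F /\
    forall x, 0 < x -> qint_is q f x (F x).

(* The bilateral series converges: both the part j >= 0 and the part j < 0
   (indexed by j = -(k+1), k : nat) converge. *)
Definition qmoment_is (q : R) (f : R -> R) (n : nat) (m : R) : Prop :=
  exists a b : R,
    infinite_sum (fun k : nat => qpow q (Z.of_nat k * Z.of_nat (S n))
                                 * f (qpow q (Z.of_nat k))) a /\
    infinite_sum (fun k : nat => qpow q (- Z.of_nat (S k) * Z.of_nat (S n))
                                 * f (qpow q (- Z.of_nat (S k)))) b /\
    m = (1 - q) * (a + b).

Definition qequiv (q : R) (f g : R -> R) : Prop :=
  forall j : Z, f (qpow q j) = g (qpow q j).

Definition qmoment_determinate (q : R) (f : R -> R) (m : nat -> R) : Prop :=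
  forall g : R -> R, is_qdensity q g ->
    (forall k : nat, qmoment_is q g k (m k)) -> qequiv q f g.

Definition is_limsup (u : nat -> R) (A : R) : Prop :=
  (forall eps, 0 < eps -> exists N : nat, forall n, (N <= n)%nat -> u n < A + eps) /\
  (forall eps, 0 < eps -> forall N : nat, exists n, (N <= n)%nat /\ A - eps < u n).

From Stdlib Require Import Reals ZArith Lra Lia.
From Coquelicot Require Import Coquelicot.
Open Scope R_scope.

(* For a q-density h put W_h(j) = q^j h(q^j), j in Z; then the n-th q-moment
   is (1 - q) sum_j W_h(j) q^(j n).  If g has the same q-moments as f, the
   sequence c = W_f - W_g has vanishing moments sum_j c(j) q^(j n) = 0 and is
   dominated by V = W_f + W_g >= 0, whose moments S(M) = 2 m(M) / (1 - q)
   grow at most like e^(a M^2) with a < ln(1/q) / 2.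
   To show c(j0) = 0 we test against P_N(x) = prod_{i=1}^N (1 - x q^(i - j0)):
   P_N vanishes at q^(j0-1), ..., q^(j0-N), lies in [0,1] at q^j for j > j0,
   is at most q^(D_N - N (j0 - j)) at q^j for j <= j0 - N (D_N = N (N+1)/2
   - N j0), and P_N(q^j0) >= exp(-1/(1-q)^2).  Isolating j0 in
   sum_j c(j) q^(j n) P_N(q^j) = 0 gives
       |c(j0)| q^(j0 n) exp(-1/(1-q)^2) <= q^((j0+1) n) S(0) + q^(D_N) S(n+N),
   and with N = K n, K large, the quadratic decay of q^(D_N) beats S(n+N),
   so |c(j0)| is bounded by a multiple of q^n for all large n, hence 0. *)

Lemma is_series_le_compat (a b : nat -> R) (la lb : R) :
  (forall k, a k <= b k) -> is_series a la -> is_series b lb -> la <= lb.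
Proof.
  intros Hab Ha Hb.
  apply (is_lim_seq_le (sum_n a) (sum_n b) la lb); [| exact Ha | exact Hb].
  intro n. rewrite !sum_n_Reals. apply sum_Rle. intros; apply Hab.
Qed.

Lemma is_series_null (u : nat -> R) : (forall k, u k = 0) -> is_series u 0.
Proof.
  intro Hu. change (is_lim_seq (sum_n u) 0).
  apply (is_lim_seq_ext (fun _ => 0)); [| apply is_lim_seq_const].
  intro n. rewrite sum_n_Reals.
  induction n as [|n IHn]; simpl; rewrite Hu; [reflexivity | rewrite <- IHn; ring].
Qed.

Lemma is_series_point (k0 : nat) (x : R) :
  is_series (fun k => if Nat.eq_dec k k0 then x else 0) x.
Proof.
  revert x; induction k0 as [|k0 IH]; intro x; apply is_series_decr_1.
  - change (is_series (fun k => if Nat.eq_dec (S k) 0 then x else 0)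
                      (x + - (if Nat.eq_dec 0 0 then x else 0))).
    destruct (Nat.eq_dec 0 0) as [_ | ?]; [| lia]. rewrite Rplus_opp_r.
    apply is_series_null. intro k. destruct (Nat.eq_dec (S k) 0); [lia | reflexivity].
  - change (is_series (fun k => if Nat.eq_dec (S k) (S k0) then x else 0)
                      (x + - (if Nat.eq_dec 0 (S k0) then x else 0))).
    destruct (Nat.eq_dec 0 (S k0)) as [? | _]; [lia |]. rewrite Ropp_0, Rplus_0_r.
    apply (is_series_ext (fun k => if Nat.eq_dec k k0 then x else 0)); [| apply IH].
    intro k. destruct (Nat.eq_dec k k0), (Nat.eq_dec (S k) (S k0)); auto; lia.
Qed.

Definition is_zsum (u : Z -> R) (s : R) : Prop :=
  exists a b, is_series (fun k : nat => u (Z.of_nat k)) a /\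
              is_series (fun k : nat => u (- Z.of_nat (S k))%Z) b /\ s = a + b.

Lemma is_zsum_ext (u v : Z -> R) (s t : R) :
  is_zsum u s -> (forall j, u j = v j) -> s = t -> is_zsum v t.
Proof.
  intros (a & b & Ha & Hb & ->) Euv <-.
  exists a, b; repeat split; auto; eapply is_series_ext; try eassumption; intro; apply Euv.
Qed.

Lemma is_zsum_plus (u v : Z -> R) (s t : R) :
  is_zsum u s -> is_zsum v t -> is_zsum (fun j => u j + v j) (s + t).
Proof.
  intros (a & b & Ha & Hb & ->) (c & d & Hc & Hd & ->).
  exists (a + c), (b + d); repeat split;
    [exact (is_series_plus _ _ _ _ Ha Hc) | exact (is_series_plus _ _ _ _ Hb Hd) | ring].
Qed.

Lemma is_zsum_scal (u : Z -> R) (s c : R) :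
  is_zsum u s -> is_zsum (fun j => c * u j) (c * s).
Proof.
  intros (a & b & Ha & Hb & ->).
  exists (c * a), (c * b); repeat split;
    [exact (is_series_scal _ _ _ Ha) | exact (is_series_scal _ _ _ Hb) | ring].
Qed.

Lemma is_zsum_le (u v : Z -> R) (s t : R) :
  (forall j, u j <= v j) -> is_zsum u s -> is_zsum v t -> s <= t.
Proof.
  intros Huv (a & b & Ha & Hb & ->) (c & d & Hc & Hd & ->).
  assert (a <= c) by (eapply is_series_le_compat; [intro; apply Huv | exact Ha | exact Hc]).
  assert (b <= d) by (eapply is_series_le_compat; [intro; apply Huv | exact Hb | exact Hd]).
  lra.
Qed.

Lemma is_zsum_point (j0 : Z) (x : R) :
  is_zsum (fun j => if Z.eq_dec j j0 then x else 0) x.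
Proof.
  destruct (Z_le_gt_dec 0 j0) as [Hj | Hj].
  - exists x, 0; repeat split; [| | ring].
    + apply (is_series_ext (fun k => if Nat.eq_dec k (Z.to_nat j0) then x else 0)).
      * intro k. destruct (Nat.eq_dec k (Z.to_nat j0)), (Z.eq_dec (Z.of_nat k) j0); auto; lia.
      * apply is_series_point.
    + apply is_series_null. intro k. destruct (Z.eq_dec _ j0); auto; lia.
  - exists 0, x; repeat split; [| | ring].
    + apply is_series_null. intro k. destruct (Z.eq_dec _ j0); auto; lia.
    + apply (is_series_ext (fun k => if Nat.eq_dec k (Z.to_nat (- j0 - 1)) then x else 0)).
      * intro k. destruct (Nat.eq_dec k (Z.to_nat (- j0 - 1))),
          (Z.eq_dec (- Z.of_nat (S k)) j0); auto; lia.
      * apply is_series_point.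
Qed.

Lemma is_zsum_isolate (t b : Z -> R) (B : R) (j0 : Z) :
  is_zsum t 0 -> is_zsum b B -> 0 <= b j0 ->
  (forall j, j <> j0 -> Rabs (t j) <= b j) -> Rabs (t j0) <= B.
Proof.
  intros Ht Hb Hb0 Htb.
  set (t' := fun j => t j + (if Z.eq_dec j j0 then - t j0 else 0)).
  assert (Ht' : is_zsum t' (- t j0)).
  { apply (is_zsum_ext _ _ _ _ (is_zsum_plus _ _ _ _ Ht (is_zsum_point j0 (- t j0))));
      [reflexivity | ring]. }
  assert (Hdom : forall j, - b j <= t' j <= b j).
  { intro j. unfold t'. destruct (Z.eq_dec j j0) as [-> | Hne]; [lra |].
    rewrite Rplus_0_r. apply Rabs_le_between, Htb, Hne. }
  assert (- t j0 <= B) by (eapply is_zsum_le; [apply Hdom | exact Ht' | exact Hb]).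
  assert (-1 * B <= - t j0).
  { eapply is_zsum_le; [| apply (is_zsum_scal _ _ (-1) Hb) | exact Ht'].
    intro j. specialize (Hdom j). lra. }
  apply Rabs_le. lra.
Qed.

Lemma Rpower_pos (q x : R) : 0 < Rpower q x.
Proof. apply exp_pos. Qed.

Lemma ln_lt_0 (q : R) : 0 < q < 1 -> ln q < 0.
Proof. intros Hq. rewrite <- ln_1. apply ln_increasing; lra. Qed.

Lemma Rpower_decreasing (q x y : R) :
  0 < q < 1 -> x < y -> Rpower q y < Rpower q x.
Proof.
  intros Hq Hxy. apply exp_increasing. pose proof (ln_lt_0 q Hq). nra.
Qed.

Lemma Rpower_antitone (q x y : R) :
  0 < q < 1 -> x <= y -> Rpower q y <= Rpower q x.
Proof.
  intros Hq [Hlt | ->]; [left; apply Rpower_decreasing; assumption | right; reflexivity].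
Qed.

Lemma Rpower_lt_1 (q x : R) : 0 < q < 1 -> 0 < x -> Rpower q x < 1.
Proof.
  intros Hq Hx. rewrite <- (Rpower_O q) by lra. apply Rpower_decreasing; assumption.
Qed.

Lemma Rpower_ge_1 (q x : R) : 0 < q < 1 -> x <= 0 -> 1 <= Rpower q x.
Proof.
  intros Hq Hx. rewrite <- (Rpower_O q) by lra. apply Rpower_antitone; assumption.
Qed.

Lemma exp_le_compat (x y : R) : x <= y -> exp x <= exp y.
Proof. intros [Hlt | ->]; [left; apply exp_increasing, Hlt | right; reflexivity]. Qed.

(* For 0 <= x <= q < 1 one has 1 - x >= exp(-x / (1 - q)); this bounds the
   Euler-type product prod (1 - q^i) from below. *)
Lemma one_minus_ge_exp (q x : R) :
  0 < q < 1 -> 0 <= x <= q -> exp (- (x / (1 - q))) <= 1 - x.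
Proof.
  intros Hq Hx.
  assert (Hinv : exp (- (x / (1 - x))) <= 1 - x).
  { pose proof (exp_ineq1_le (x / (1 - x))) as Hexp.
    rewrite exp_Ropp. pose proof (exp_pos (x / (1 - x))).
    apply (Rmult_le_reg_l (exp (x / (1 - x)))); [assumption |].
    rewrite Rinv_r by lra.
    replace (1 + x / (1 - x)) with (/ (1 - x)) in Hexp by (field; lra).
    apply (Rmult_le_compat_r (1 - x)) in Hexp; [| lra].
    rewrite Rinv_l in Hexp by lra. exact Hexp. }
  eapply Rle_trans; [| exact Hinv]. apply exp_le_compat, Ropp_le_contravar.
  unfold Rdiv. apply Rmult_le_compat_l; [lra |]. apply Rinv_le_contravar; lra.
Qed.

Section TestPolynomials.

Variables (q : R) (j0 : Z).
Hypothesis Hq : 0 < q < 1.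

Fixpoint test_poly (N : nat) (x : R) : R :=
  match N with
  | O => 1
  | S N' => test_poly N' x * (1 - x * Rpower q (INR (S N') - IZR j0))
  end.

(* Multiplication by x maps moment sequences to shifted moment sequences, so
   sequences with vanishing moments are orthogonal to every P_N. *)
Lemma test_poly_annihilates (c : Z -> R) :
  (forall n, is_zsum (fun j => c j * Rpower q (IZR j * INR n)) 0) ->
  forall N n, is_zsum (fun j => c j * Rpower q (IZR j * INR n)
                                * test_poly N (Rpower q (IZR j))) 0.
Proof.
  intros Hmom N. induction N as [|N IH]; intro n.
  - apply (is_zsum_ext _ _ _ _ (Hmom n)); [intro j; cbn [test_poly]; ring | reflexivity].
  - set (alpha := Rpower q (INR (S N) - IZR j0)).
    apply (is_zsum_ext _ _ _ _ (is_zsum_plus _ _ _ _ (IH n) (is_zsum_scal _ _ (- alpha) (IH (S n)))));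
      [| ring].
    intro j. cbn [test_poly]. fold alpha. rewrite (S_INR n).
    replace (IZR j * (INR n + 1)) with (IZR j * INR n + IZR j) by ring.
    rewrite Rpower_plus. ring.
Qed.

Lemma test_poly_unit_interval (N : nat) (y : R) :
  IZR j0 <= y -> 0 <= test_poly N (Rpower q y) <= 1.
Proof.
  intros Hy. induction N as [|N IH]; cbn [test_poly]; [lra |].
  rewrite <- Rpower_plus.
  assert (Hlt : Rpower q (y + (INR (S N) - IZR j0)) < 1).
  { apply Rpower_lt_1; [assumption |]. rewrite S_INR. pose proof (pos_INR N). lra. }
  pose proof (Rpower_pos q (y + (INR (S N) - IZR j0))). nra.
Qed.

Lemma test_poly_root (N i : nat) :
  (i < N)%nat -> test_poly N (Rpower q (IZR j0 - INR (S i))) = 0.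
Proof.
  induction N as [|N IH]; intros Hi; [lia |]. cbn [test_poly].
  destruct (Nat.eq_dec i N) as [-> | Hne].
  - rewrite <- Rpower_plus.
    replace (IZR j0 - INR (S N) + (INR (S N) - IZR j0)) with 0 by ring.
    rewrite Rpower_O by lra. ring.
  - rewrite IH by lia. ring.
Qed.

Lemma test_poly_far_bound (N : nat) (y : R) :
  y + INR N - IZR j0 <= 0 ->
  Rabs (test_poly N (Rpower q y))
  <= Rpower q (INR N * y - INR N * IZR j0 + INR N * (INR N + 1) / 2).
Proof.
  induction N as [|N IH]; intros Hy.
  - cbn [test_poly INR]. rewrite Rabs_R1.
    replace (0 * y - 0 * IZR j0 + 0 * (0 + 1) / 2) with 0 by field.
    rewrite Rpower_O by lra. lra.
  - cbn [test_poly]. rewrite <- Rpower_plus, Rabs_mult. rewrite S_INR in *.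
    set (e := y + (INR N + 1 - IZR j0)).
    assert (He : 1 <= Rpower q e) by (apply Rpower_ge_1; unfold e; lra).
    replace ((INR N + 1) * y - (INR N + 1) * IZR j0 + (INR N + 1) * (INR N + 1 + 1) / 2)
      with ((INR N * y - INR N * IZR j0 + INR N * (INR N + 1) / 2) + e) by (unfold e; field).
    rewrite Rpower_plus.
    apply Rmult_le_compat; [apply Rabs_pos | apply Rabs_pos | apply IH; lra |].
    rewrite Rabs_left1; lra.
Qed.

Lemma test_poly_center (N : nat) :
  exp (- (1 / (1 - q) ^ 2)) <= test_poly N (Rpower q (IZR j0)).
Proof.
  assert (Hstrong : forall N, exp (- ((1 - q ^ N) / (1 - q) ^ 2))
                              <= test_poly N (Rpower q (IZR j0))).
  { intros M. induction M as [|M IH]; cbn [test_poly].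
    - replace (- ((1 - q ^ 0) / (1 - q) ^ 2)) with 0 by (field; lra).
      rewrite exp_0. lra.
    - rewrite <- Rpower_plus.
      replace (IZR j0 + (INR (S M) - IZR j0)) with (INR (S M)) by ring.
      rewrite Rpower_pow by lra.
      assert (HqM : 0 <= q ^ M <= 1) by (split; [apply pow_le; lra | rewrite <- (pow1 M); apply pow_incr; lra]).
      assert (Hfactor : exp (- (q ^ S M / (1 - q))) <= 1 - q ^ S M).
      { apply one_minus_ge_exp; [assumption |]. cbn [pow]. nra. }
      assert (Hexpo : - ((1 - q ^ S M) / (1 - q) ^ 2)
                      <= - ((1 - q ^ M) / (1 - q) ^ 2) + - (q ^ S M / (1 - q))).
      { assert (Hid : - ((1 - q ^ S M) / (1 - q) ^ 2) + q ^ M / (1 - q)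
                      = - ((1 - q ^ M) / (1 - q) ^ 2)) by (simpl; field; lra).
        assert (q ^ S M / (1 - q) <= q ^ M / (1 - q)).
        { unfold Rdiv. apply Rmult_le_compat_r; [left; apply Rinv_0_lt_compat; lra |].
          simpl. nra. }
        lra. }
      eapply Rle_trans; [apply exp_le_compat, Hexpo |]. rewrite exp_plus. apply Rmult_le_compat; auto; left; apply exp_pos. }
  eapply Rle_trans; [| apply Hstrong]. apply exp_le_compat, Ropp_le_contravar.
  unfold Rdiv. apply Rmult_le_compat_r.
  - left. apply Rinv_0_lt_compat, pow_lt. lra.
  - pose proof (pow_le q N). lra.
Qed.

(* Weight of the lattice point q^j (j <> j0) in the tested n-th moment: it is
   at most q^((j0+1) n) above j0, zero on the roots, and at most
   q^(D_N + j (n + N)) below the roots, where D_N = N (N + 1) / 2 - N j0. *)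
Lemma test_poly_weight_bound (N n : nat) (j : Z) :
  j <> j0 ->
  Rpower q (IZR j * INR n) * Rabs (test_poly N (Rpower q (IZR j)))
  <= Rpower q ((IZR j0 + 1) * INR n)
     + Rpower q (INR N * (INR N + 1) / 2 - INR N * IZR j0 + IZR j * INR (n + N)).
Proof.
  intros Hne.
  pose proof (Rpower_pos q (IZR j * INR n)).
  pose proof (Rpower_pos q ((IZR j0 + 1) * INR n)).
  pose proof (Rpower_pos q (INR N * (INR N + 1) / 2 - INR N * IZR j0 + IZR j * INR (n + N))).
  destruct (Z_lt_le_dec j0 j) as [Habove | Hbelow].
  - assert (Hj : IZR j0 + 1 <= IZR j) by (rewrite <- plus_IZR; apply IZR_le; lia).
    pose proof (test_poly_unit_interval N (IZR j) ltac:(lra)) as HP.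
    rewrite Rabs_pos_eq by lra.
    assert (Rpower q (IZR j * INR n) <= Rpower q ((IZR j0 + 1) * INR n)).
    { apply Rpower_antitone; [assumption |].
      apply Rmult_le_compat_r; [apply pos_INR | exact Hj]. }
    apply Rle_trans with (Rpower q (IZR j * INR n)); [| lra].
    rewrite <- Rmult_1_r. apply Rmult_le_compat_l; lra.
  - destruct (Z_le_gt_dec (j0 - Z.of_nat N) j) as [Hroot | Hfar].
    + assert (Hj : IZR j = IZR j0 - INR (S (Z.to_nat (j0 - j - 1)))).
      { rewrite INR_IZR_INZ, Nat2Z.inj_succ, Z2Nat.id by lia.
        rewrite <- minus_IZR. f_equal. lia. }
      assert (HP0 : test_poly N (Rpower q (IZR j)) = 0)
        by (rewrite Hj; apply test_poly_root; lia).
      rewrite HP0, Rabs_R0. lra.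
    + assert (Hj : IZR j + INR N - IZR j0 <= 0).
      { rewrite INR_IZR_INZ, <- plus_IZR, <- minus_IZR. apply IZR_le. lia. }
      pose proof (test_poly_far_bound N (IZR j) Hj) as HP.
      replace (INR N * (INR N + 1) / 2 - INR N * IZR j0 + IZR j * INR (n + N))
        with (IZR j * INR n + (INR N * IZR j - INR N * IZR j0 + INR N * (INR N + 1) / 2))
        by (rewrite plus_INR; ring).
      rewrite Rpower_plus.
      apply (Rmult_le_compat_l (Rpower q (IZR j * INR n))) in HP; lra.
Qed.

End TestPolynomials.

(* Choice of the dilation N = K n: for a < ln(1/q)/2 the exponent of
   q^(D_N) e^(a (n + N)^2) eventually lies below that of q^((j0 + 1) n). *)
Lemma quadratic_exponent_bound (lnq a j0 : R) :
  lnq < 0 -> a < - lnq / 2 ->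
  exists K n0 : nat, forall n : nat, (n0 <= n)%nat ->
    (INR (K * n) * (INR (K * n) + 1) / 2 - INR (K * n) * j0) * lnq
    + a * INR (n + K * n) ^ 2 <= (j0 + 1) * INR n * lnq.
Proof.
  intros Hlnq Ha.
  set (L := - lnq). set (d := L / 2 - a).
  assert (HL : 0 < L) by (unfold L; lra).
  assert (Hd : 0 < d) by (unfold d, L; lra).
  destruct (INR_unbounded (1 + 3 * Rabs a / d)) as [K HK].
  set (k := INR K) in HK.
  assert (Hk : 1 <= k) by (pose proof (Rabs_pos a); pose proof (Rdiv_le_0_compat (3 * Rabs a) d); lra).
  assert (Hdk : 3 * Rabs a < d * k).
  { apply (Rmult_lt_compat_l d) in HK; [| exact Hd].
    replace (d * (1 + 3 * Rabs a / d)) with (d + 3 * Rabs a) in HK by (field; lra). lra. }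
  (* the coefficient of -n^2 in the exponent difference *)
  set (cc := L / 2 * k ^ 2 - a * (k + 1) ^ 2).
  assert (Hcc : 0 < cc).
  { assert (Hcc' : cc = d * k ^ 2 - a * (2 * k + 1)) by (unfold cc, d; ring).
    pose proof (Rle_abs a). pose proof (Rabs_pos a). nra. }
  set (bb := L * ((k + 1) * Rabs j0 + 1)).
  destruct (INR_unbounded (bb / cc)) as [n0 Hn0].
  exists K, n0. intros n Hn. set (x := INR n).
  assert (Hx : bb <= cc * x).
  { assert (bb / cc <= x) by (pose proof (le_INR _ _ Hn); unfold x; lra).
    apply (Rmult_le_compat_l cc) in H; [| lra].
    replace (cc * (bb / cc)) with bb in H by (field; lra). exact H. }
  rewrite mult_INR, plus_INR, mult_INR. fold k x. replace lnq with (- L) by (unfold L; ring).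
  assert (Hx0 : 0 <= x) by apply pos_INR.
  assert (Hj0 : L * (k + 1) * x * j0 <= L * (k + 1) * x * Rabs j0).
  { apply Rmult_le_compat_l; [| apply Rle_abs]. repeat apply Rmult_le_pos; lra. }
  assert (x * bb <= x * (cc * x)) by (apply Rmult_le_compat_l; lra).
  assert (0 <= L * k * x) by (repeat apply Rmult_le_pos; lra).
  unfold cc, bb in *. nra.
Qed.

Lemma le_0_of_geometric_bound (q x C : R) (n0 : nat) :
  0 < q < 1 -> (forall n, (n0 <= n)%nat -> x <= q ^ n * C) -> x <= 0.
Proof.
  intros Hq Hbound.
  replace 0 with (0 * C) by ring.
  apply (is_lim_seq_le_loc (fun _ => x) (fun n => q ^ n * C) x (0 * C)).
  - exists n0. exact Hbound.
  - apply is_lim_seq_const.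
  - apply (is_lim_seq_mult' (fun n => q ^ n) (fun _ => C) 0 C); [| apply is_lim_seq_const].
    apply is_lim_seq_geom. rewrite Rabs_pos_eq; lra.
Qed.

Section VanishingMoments.

Variables (q : R) (c V : Z -> R) (S : nat -> R).
Hypothesis Hq : 0 < q < 1.
Hypothesis Hdom : forall j, Rabs (c j) <= V j.
Hypothesis HS : forall M, is_zsum (fun j => V j * Rpower q (IZR j * INR M)) (S M).
Hypothesis Hmom : forall n, is_zsum (fun j => c j * Rpower q (IZR j * INR n)) 0.

(* Testing the vanishing moments against P_N and isolating the term j0. *)
Lemma vanishing_moments_estimate (j0 : Z) (n N : nat) :
  Rabs (c j0) * Rpower q (IZR j0 * INR n) * exp (- (1 / (1 - q) ^ 2))
  <= Rpower q ((IZR j0 + 1) * INR n) * S 0%nat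
     + Rpower q (INR N * (INR N + 1) / 2 - INR N * IZR j0) * S (n + N)%nat.
Proof.
  set (D := INR N * (INR N + 1) / 2 - INR N * IZR j0).
  set (P := test_poly q j0 N).
  set (weight := fun j => Rpower q ((IZR j0 + 1) * INR n) + Rpower q (D + IZR j * INR (n + N))).
  assert (HV : forall j, 0 <= V j) by (intro j; eapply Rle_trans; [apply Rabs_pos | apply Hdom]).
  assert (Hweight : forall j, 0 <= weight j)
    by (intro j; pose proof (Rpower_pos q ((IZR j0 + 1) * INR n));
        pose proof (Rpower_pos q (D + IZR j * INR (n + N))); unfold weight; lra).
  assert (Hmajor : is_zsum (fun j => V j * weight j)
                     (Rpower q ((IZR j0 + 1) * INR n) * S 0%nat + Rpower q D * S (n + N)%nat)).
  { apply (is_zsum_ext _ _ _ _ (is_zsum_plus _ _ _ _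
             (is_zsum_scal _ _ (Rpower q ((IZR j0 + 1) * INR n)) (HS 0))
             (is_zsum_scal _ _ (Rpower q D) (HS (n + N))))); [| reflexivity].
    intro j. unfold weight. rewrite Rpower_plus.
    replace (IZR j * INR 0) with 0 by (simpl; ring). rewrite Rpower_O by lra. ring. }
  assert (Htest := test_poly_annihilates q j0 c Hmom N n).
  assert (Hisolated := is_zsum_isolate _ _ _ j0 Htest Hmajor
                         (Rmult_le_pos _ _ (HV j0) (Hweight j0))).
  eapply Rle_trans; [| apply Hisolated].
  - rewrite !Rabs_mult, (Rabs_pos_eq (Rpower q _)) by (left; apply Rpower_pos).
    apply Rmult_le_compat_l.
    + apply Rmult_le_pos; [apply Rabs_pos | left; apply Rpower_pos].
    + eapply Rle_trans; [apply (test_poly_center q j0 Hq N) | apply Rle_abs].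
  - intros j Hne. rewrite !Rabs_mult, (Rabs_pos_eq (Rpower q _)) by (left; apply Rpower_pos).
    rewrite Rmult_assoc. apply Rmult_le_compat; [apply Rabs_pos | | apply Hdom |].
    + apply Rmult_le_pos; [left; apply Rpower_pos | apply Rabs_pos].
    + apply (test_poly_weight_bound q j0 Hq N n j Hne).
Qed.

(* With N = K n the estimate gives |c(j0)| exp(-1/(1-q)^2) <= q^n (S(0) + C). *)
Theorem vanishing_moments_zero (a C : R) (N0 : nat) :
  a < ln (1 / q) / 2 -> 0 <= C ->
  (forall M, (N0 <= M)%nat -> S M <= C * exp (a * INR M ^ 2)) ->
  forall j0, c j0 = 0.
Proof.
  intros Ha HC Hgrowth j0.
  assert (Hlnq : ln q < 0) by (apply ln_lt_0, Hq).
  assert (Ha' : a < - ln q / 2)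
    by (replace (1 / q) with (/ q) in Ha by (field; lra); rewrite ln_Rinv in Ha by lra; exact Ha).
  destruct (quadratic_exponent_bound (ln q) a (IZR j0) Hlnq Ha') as (K & n0 & Hexpo).
  set (delta := exp (- (1 / (1 - q) ^ 2))).
  assert (Hdelta : 0 < delta) by apply exp_pos.
  assert (Hgeom : Rabs (c j0) * delta <= 0).
  { apply (le_0_of_geometric_bound q _ (S 0%nat + C) (N0 + n0) Hq). intros n Hn.
    set (N := (K * n)%nat).
    assert (Hest := vanishing_moments_estimate j0 n N).
    set (D := INR N * (INR N + 1) / 2 - INR N * IZR j0) in Hest.
    assert (Hfar : Rpower q D * S (n + N)%nat <= Rpower q ((IZR j0 + 1) * INR n) * C).
    { apply Rle_trans with (Rpower q D * (C * exp (a * INR (n + N) ^ 2))).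
      - apply Rmult_le_compat_l; [left; apply Rpower_pos | apply Hgrowth; lia].
      - replace (Rpower q D * (C * exp (a * INR (n + N) ^ 2)))
          with (exp (D * ln q + a * INR (n + N) ^ 2) * C) by (unfold Rpower; rewrite exp_plus; ring).
        apply Rmult_le_compat_r; [exact HC |].
        apply exp_le_compat. apply Hexpo. lia. }
    assert (Hsplit : Rpower q ((IZR j0 + 1) * INR n) = Rpower q (IZR j0 * INR n) * q ^ n).
    { rewrite <- Rpower_pow, <- Rpower_plus by lra. f_equal. ring. }
    rewrite Hsplit in Hest, Hfar. fold delta in Hest.
    apply (Rmult_le_reg_l (Rpower q (IZR j0 * INR n))); [apply Rpower_pos |]. lra. }
  pose proof (Rabs_pos (c j0)).
  apply Rabs_eq_0. nra.
Qed.

End VanishingMoments.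

(* A q-density is nonnegative: F(x) = x (1 - q) h(x) + F(q x) by shifting the
   Jackson series, and F is nondecreasing. *)
Lemma qdensity_nonneg (q : R) (h : R -> R) (x : R) :
  0 < q < 1 -> is_qdensity q h -> 0 < x -> 0 <= h x.
Proof.
  intros Hq [F [[Hmono _] Hint]] Hx.
  assert (Hqx : 0 < q * x) by nra.
  set (u := fun j : nat => x * (1 - q) * h (x * q ^ j) * q ^ j).
  assert (Htail : is_series (fun k => u (S k)) (F x - u 0%nat)).
  { apply is_series_incr_1. change (is_series u (F x - u 0%nat + u 0%nat)).
    replace (F x - u 0%nat + u 0%nat) with (F x) by ring.
    apply is_series_Reals, Hint, Hx. }
  assert (Hshift : is_series (fun k => u (S k)) (F (q * x))).
  { assert (Hpt : forall k, q * x * (1 - q) * h (q * x * q ^ k) * q ^ k = u (S k)).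
    { intro k. unfold u. cbn [pow].
      replace (x * (q * q ^ k)) with (q * x * q ^ k) by ring. ring. }
    apply (is_series_ext _ _ _ Hpt), is_series_Reals, Hint, Hqx. }
  assert (Hstep : F x - u 0%nat = F (q * x)).
  { rewrite <- (is_series_unique _ _ Htail). apply is_series_unique, Hshift. }
  assert (Hu0 : u 0%nat = x * (1 - q) * h x) by (unfold u; cbn [pow]; rewrite !Rmult_1_r; ring).
  assert (F (q * x) <= F x) by (apply Hmono; nra).
  assert (Hpos : 0 < x * (1 - q)) by nra.
  destruct (Rle_or_lt 0 (h x)) as [Hle | Hlt]; [exact Hle | nra].
Qed.

Definition lattice_weight (q : R) (h : R -> R) (j : Z) : R := qpow q j * h (qpow q j).

Lemma lattice_weight_nonneg (q : R) (h : R -> R) (j : Z) :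
  0 < q < 1 -> is_qdensity q h -> 0 <= lattice_weight q h j.
Proof.
  intros Hq Hh. unfold lattice_weight, qpow. pose proof (powerRZ_lt q j ltac:(lra)).
  apply Rmult_le_pos; [lra | apply (qdensity_nonneg q); assumption].
Qed.

Lemma qmoment_as_zsum (q : R) (h : R -> R) (n : nat) (mn : R) :
  0 < q < 1 -> qmoment_is q h n mn ->
  is_zsum (fun j => lattice_weight q h j * Rpower q (IZR j * INR n)) (mn / (1 - q)).
Proof.
  intros Hq (a & b & Ha & Hb & Hm).
  assert (Hterm : forall j, qpow q (j * Z.of_nat (S n)) * h (qpow q j)
                            = lattice_weight q h j * Rpower q (IZR j * INR n)).
  { intro j. unfold lattice_weight, qpow. rewrite !powerRZ_Rpower by lra.
    rewrite mult_IZR, <- INR_IZR_INZ, S_INR.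
    replace (IZR j * (INR n + 1)) with (IZR j + IZR j * INR n) by ring.
    rewrite Rpower_plus. ring. }
  exists a, b; repeat split.
  - apply (is_series_ext _ _ _ (fun k => Hterm (Z.of_nat k))), is_series_Reals, Ha.
  - apply (is_series_ext _ _ _ (fun k => Hterm (- Z.of_nat (S k))%Z)), is_series_Reals, Hb.
  - rewrite Hm. field. lra.
Qed.

Lemma limsup_growth (u : nat -> R) (A a : R) :
  is_limsup (fun n => ln (u n) / INR n ^ 2) A -> A < a ->
  exists N0, forall M, (N0 <= M)%nat -> u M <= exp (a * INR M ^ 2).
Proof.
  intros [Hupper _] Ha.
  destruct (Hupper (a - A) ltac:(lra)) as [N HN].
  exists (S N). intros M HM.
  assert (HM2 : 0 < INR M ^ 2) by (apply pow_lt, lt_0_INR; lia).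
  destruct (Rle_or_lt (u M) 0) as [Hle | Hpos]; [pose proof (exp_pos (a * INR M ^ 2)); lra |].
  rewrite <- (exp_ln (u M)) by exact Hpos. left. apply exp_increasing.
  specialize (HN M ltac:(lia)). replace (A + (a - A)) with a in HN by ring.
  apply (Rmult_lt_compat_r (INR M ^ 2)) in HN; [| exact HM2].
  unfold Rdiv in HN. rewrite Rmult_assoc, Rinv_l, Rmult_1_r in HN by lra. exact HN.
Qed.

(* Apply the uniqueness principle to c = W_f - W_g and V = W_f + W_g. *)
Theorem proposition1 (q : R) (f : R -> R) (m : nat -> R) (A : R) :
  0 < q < 1 ->
  is_qdensity q f ->
  (forall n : nat, qmoment_is q f n (m n)) ->
  is_limsup (fun n : nat => ln (m n) / (INR n) ^ 2) A ->
  A < ln (1 / q) / 2 ->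
  qmoment_determinate q f m.
Proof.
  intros Hq Hf Hmf Hlimsup HA g Hg Hmg j.
  set (a := (A + ln (1 / q) / 2) / 2).
  destruct (limsup_growth m A a Hlimsup ltac:(unfold a; lra)) as [N0 HN0].
  set (Wf := lattice_weight q f). set (Wg := lattice_weight q g).
  assert (Hdom : forall j, Rabs (Wf j - Wg j) <= Wf j + Wg j).
  { intro i. pose proof (lattice_weight_nonneg q f i Hq Hf).
    pose proof (lattice_weight_nonneg q g i Hq Hg). apply Rabs_le. unfold Wf, Wg. lra. }
  assert (Hsum : forall M, is_zsum (fun j => (Wf j + Wg j) * Rpower q (IZR j * INR M))
                                   (2 / (1 - q) * m M)).
  { intro M. apply (is_zsum_ext _ _ _ _ (is_zsum_plus _ _ _ _
                     (qmoment_as_zsum q f M _ Hq (Hmf M)) (qmoment_as_zsum q g M _ Hq (Hmg M))));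
      [intro i; unfold Wf, Wg; ring | field; lra]. }
  assert (Hdiff : forall n, is_zsum (fun j => (Wf j - Wg j) * Rpower q (IZR j * INR n)) 0).
  { intro n. apply (is_zsum_ext _ _ _ _ (is_zsum_plus _ _ _ _ (qmoment_as_zsum q f n _ Hq (Hmf n))
                     (is_zsum_scal _ _ (-1) (qmoment_as_zsum q g n _ Hq (Hmg n)))));
      [intro i; unfold Wf, Wg; ring | ring]. }
  assert (Hgrowth : forall M, (N0 <= M)%nat -> 2 / (1 - q) * m M <= 2 / (1 - q) * exp (a * INR M ^ 2)).
  { intros M HM. apply Rmult_le_compat_l; [apply Rlt_le, Rdiv_lt_0_compat; lra | apply HN0, HM]. }
  assert (Hzero := vanishing_moments_zero q _ _ _ Hq Hdom Hsum Hdiff a (2 / (1 - q)) N0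
                     ltac:(unfold a; lra) ltac:(apply Rlt_le, Rdiv_lt_0_compat; lra) Hgrowth j).
  unfold Wf, Wg, lattice_weight in Hzero.
  pose proof (powerRZ_lt q j ltac:(lra)).
  apply (Rmult_eq_reg_l (qpow q j)); unfold qpow in *; lra.
Qed.
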